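(* Consider a multi-agent Markov game with agents $\mathcal N=\{1,\dots,n\}$, finite local state spaces $\mathcal S_i$ and action spaces $\mathcal A_i$, bounded rewards $r_i:\mathcal S\times\mathcal A\to\mathbb R$, discount $\gamma\in(0,1)$, and local policies $\xi_i:\mathcal S_i\to\Delta(\mathcal A_i)$ (joint policy $\xi(a\mid s)=\prod_i\xi_i(a_i\mid s_i)$). Suppose that (i) the transitions are completely local: given $(s(t),a(t))$, the components $s_i(t+1)$ are drawn independently with $s_i(t+1)\sim P_i(\cdot\mid s_i(t),a_i(t))$; (ii) the one-shot game is a potential game: there is $\phi:\mathcal S\times\mathcal A\to\mathbb R$ such that for all $i$, all $(s_i,a_i),(s_i',a_i')\in\mathcal S_i\times\mathcal A_i$ and all $(s_{-i},a_{-i})$, $r_i(s_i,a_i,s_{-i},a_{-i})-r_i(s_i',a_i',s_{-i},a_{-i})=\phi(s_i,a_i,s_{-i},a_{-i})-\phi(s_i',a_i',s_{-i},a_{-i})$. Then there is a function $\Phi:\Xi\times\mathcal S\to\mathbb R$ (namely $\Phi^\xi(s)=\sum_{t\ge0}\gamma^t\mathbb E_\xi[\phi(s(t),a(t))\mid s(0)=s]$) such that for every agent $i$, all $\xi_i,\xi_i'\in\Xi_i$, all $\xi_{-i}\in\Xi_{-i}$ and all $s\in\mathcal S$, $$V_i^{\xi_i,\xi_{-i}}(s)-V_i^{\xi_i',\xi_{-i}}(s)=\Phi^{\xi_i,\xi_{-i}}(s)-\Phi^{\xi_i',\xi_{-i}}(s).$$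
   Context: $\Xi_i$ denotes the set of local policies of agent $i$, $\Xi=\prod_i\Xi_i$, $\Xi_{-i}=\prod_{j\ne i}\Xi_j$. $V_i^\xi(s)=\sum_{t\ge0}\gamma^t\mathbb E_\xi[r_i(s(t),a(t))\mid s(0)=s]$, where $a(t)\sim\xi(\cdot\mid s(t))$. *)

From HB Require Import structures.
From mathcomp Require Import all_boot all_order all_algebra.
From mathcomp Require Import all_classical all_reals all_analysis.
Set Implicit Arguments. Unset Strict Implicit. Unset Printing Implicit Defensive.
Import Order.TTheory GRing.Theory Num.Theory.
Local Open Scope ring_scope.

Section MarkovGame.
Variables (R : realType) (n : nat) (S A : 'I_n -> finType).

Definition jstate := {dffun forall i : 'I_n, S i}.
Definition jaction := {dffun forall i : 'I_n, A i}.

Definition is_local_policy (i : 'I_n) (p : S i -> A i -> R) : Prop :=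
  forall si, (forall ai, 0 <= p si ai) /\ \sum_(ai : A i) p si ai = 1.

Definition is_local_kernel (i : 'I_n) (P : S i -> A i -> S i -> R) : Prop :=
  forall si ai, (forall si', 0 <= P si ai si') /\ \sum_(si' : S i) P si ai si' = 1.

Definition profile := forall i : 'I_n, S i -> A i -> R.

Definition joint_policy (xi : profile) (s : jstate) (a : jaction) : R :=
  \prod_(i < n) xi i (s i) (a i).

Definition joint_kernel (P : forall i, S i -> A i -> S i -> R)
  (s : jstate) (a : jaction) (s' : jstate) : R :=
  \prod_(i < n) P i (s i) (a i) (s' i).

Fixpoint state_dist (P : forall i, S i -> A i -> S i -> R) (xi : profile)
  (s0 : jstate) (t : nat) : jstate -> R :=
  match t with
  | 0 => fun s => if s == s0 then 1 else 0
  | t'.+1 => fun s' => \sum_(s : jstate) state_dist P xi s0 t' s *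
        \sum_(a : jaction) joint_policy xi s a * joint_kernel P s a s'
  end.

Definition exp_stage (P : forall i, S i -> A i -> S i -> R) (xi : profile)
  (f : jstate -> jaction -> R) (s0 : jstate) (t : nat) : R :=
  \sum_(s : jstate) state_dist P xi s0 t s *
     \sum_(a : jaction) joint_policy xi s a * f s a.

Definition value (P : forall i, S i -> A i -> S i -> R) (gamma : R) (xi : profile)
  (f : jstate -> jaction -> R) (s0 : jstate) : R :=
  limn (fun N : nat => \sum_(0 <= t < N) gamma ^+ t * exp_stage P xi f s0 t).

Definition upd_state (s : jstate) (i : 'I_n) (x : S i) : jstate :=
  @finfun _ (fun j => S j) (@dfwith _ (fun j => S j) (fun k => s k) i x).
Definition upd_action (a : jaction) (i : 'I_n) (x : A i) : jaction :=
  @finfun _ (fun j => A j) (@dfwith _ (fun j => A j) (fun k => a k) i x).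
Definition upd_policy (xi : profile) (i : 'I_n) (p : S i -> A i -> R) : profile :=
  @dfwith _ (fun j => S j -> A j -> R) xi i p.

End MarkovGame.

From HB Require Import structures.
From mathcomp Require Import all_boot all_order all_algebra.
From mathcomp Require Import all_classical all_reals all_analysis.
From mathcomp Require Import ring lra.
Import Order.TTheory GRing.Theory Num.Theory.
Import numFieldNormedType.Exports.
Local Open Scope ring_scope.

(* Write r_i = phi + h_i.  The potential-game identity says exactly that h_i
   does not depend on the local pair (s_i, a_i).  Because transitions are
   local, the law of (s_{-i}(t), a_{-i}(t)) does not depend on xi_i, so neither
   does the discounted value of h_i; since values are linear in the reward,
   V_i - Phi is the value of h_i and is therefore the same for xi_i and xi_i'. *)

Lemma sum_prod_dffun (R : comNzRingType) (I : finType) (T : I -> finType)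
    (F : forall i, T i -> R) :
  \sum_(x : {dffun forall i, T i}) \prod_i F i (x i) = \prod_i \sum_(y : T i) F i y.
Proof.
rewrite (reindex (@dffun_of_fprod I T)); last exact/onW_bij/dffun_of_fprod_bij.
transitivity (\sum_(t : fprod T) \prod_(i in I) [ffun y => F i y] (t i)).
  by apply: eq_bigr => t _; apply: eq_bigr => i _; rewrite !ffunE.
rewrite (@big_fprod R 0 1 *%R +%R I T (fun i => [ffun y => F i y])).
rewrite -(bigA_distr_big_dep _ (fun i u => untag 0 [ffun y => F i y] u)).
apply: eq_bigr => i _; rewrite -(big_tag (fun i => [ffun y => F i y])).
by apply: eq_bigr => y _; rewrite ffunE.
Qed.

Lemma ler_sum_term (R : numDomainType) (I : finType) (F : I -> R) j :
  (forall i, 0 <= F i) -> F j <= \sum_i F i.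
Proof. by move=> F0; rewrite (bigD1 j) //= lerDl sumr_ge0. Qed.
Arguments ler_sum_term {R I} F j.

Section DffunWith.
Context {I : finType} {T : I -> finType}.
Local Notation dffun := {dffun forall j, T j}.

Definition dffun_with (x : dffun) (i : I) (y : T i) : dffun :=
  @finfun _ T (@dfwith _ T (fun k => x k) i y).
Arguments dffun_with x [i] y.

Lemma dffun_with_in x i (y : T i) : dffun_with x y i = y.
Proof. by rewrite ffunE; apply: dfwith_in. Qed.

Lemma dffun_with_out x i (y : T i) j : j != i -> dffun_with x y j = x j.
Proof. by move=> ji; rewrite ffunE; apply: dfwith_out; rewrite eq_sym. Qed.

Lemma dffun_withK x i (y y' : T i) : dffun_with (dffun_with x y) y' = dffun_with x y'.
Proof.
apply/ffunP => j; have [->|ji] := eqVneq j i; first by rewrite !dffun_with_in.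
by rewrite !dffun_with_out.
Qed.

Lemma dffun_with_id x i : dffun_with x (x i) = x.
Proof.
apply/ffunP => j; have [->|ji] := eqVneq j i; first by rewrite dffun_with_in.
by rewrite dffun_with_out.
Qed.

(* The involution (x, y) |-> (x with y at i, x i) exchanges the roles of the
   weight on the i-th coordinate and the extra averaging variable. *)
Lemma sum_coord_weight_indep (R : comNzRingType) i (w w' : T i -> R) (G : dffun -> R) :
  \sum_y w y = 1 -> \sum_y w' y = 1 ->
  (forall x (y : T i), G (dffun_with x y) = G x) ->
  \sum_(x : dffun) w (x i) * G x = \sum_(x : dffun) w' (x i) * G x.
Proof.
move=> w1 w'1 G_free.
transitivity (\sum_(x : dffun) \sum_y w' y * (w (x i) * G x)).
  by apply: eq_bigr => x _; rewrite -big_distrl /= w'1 mul1r.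
transitivity (\sum_(x : dffun) \sum_y w y * (w' (x i) * G x)); last first.
  by apply: eq_bigr => x _; rewrite -big_distrl /= w1 mul1r.
rewrite !pair_bigA /=.
pose swap (p : dffun * T i) := (dffun_with p.1 p.2, p.1 i).
have swapK : involutive swap.
  by case=> x y; rewrite /swap /= dffun_withK dffun_with_id dffun_with_in.
rewrite (reindex_inj (inv_inj swapK)) /=; apply: eq_bigr => -[x y] _ /=.
by rewrite dffun_with_in G_free mulrCA.
Qed.

End DffunWith.

Arguments dffun_with {I T} x [i] y.
Arguments sum_coord_weight_indep {I T R i} w w' G.

Section MarkovGame.
Context {R : realType} {n : nat} {S A : 'I_n -> finType}.
Variable P : forall i : 'I_n, S i -> A i -> S i -> R.
Hypothesis P_kernel : forall i, is_local_kernel (P i).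
Local Notation JS := (jstate S).
Local Notation JA := (jaction A).
Local Notation profile := (profile R S A).

Definition is_policy_profile (xi : profile) := forall j, is_local_policy (xi j).

Lemma sum_state_dist_succ (xi : profile) s0 t (g : JS -> R) :
  \sum_s' state_dist P xi s0 t.+1 s' * g s' =
  \sum_s state_dist P xi s0 t s *
    \sum_a joint_policy xi s a * \sum_s' joint_kernel P s a s' * g s'.
Proof.
under eq_bigr do rewrite /= big_distrl /=.
rewrite exchange_big /=; apply: eq_bigr => s _.
under eq_bigr do rewrite -mulrA.
rewrite -big_distrr /=; congr (_ * _).
under eq_bigr do rewrite big_distrl /=.
rewrite exchange_big /=; apply: eq_bigr => a _.
by rewrite big_distrr /=; apply: eq_bigr => s' _; rewrite mulrA.
Qed.

Section Profile.
Variable xi : profile.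
Hypothesis xi_policy : is_policy_profile xi.

Lemma joint_policy_ge0 s a : 0 <= joint_policy xi s a.
Proof. by apply: prodr_ge0 => j _; case: (xi_policy j (s j)). Qed.

Lemma sum_joint_policy s : \sum_a joint_policy xi s a = 1.
Proof.
rewrite (@sum_prod_dffun _ _ _ (fun j y => xi j (s j) y)).
by apply: big1 => j _; case: (xi_policy j (s j)).
Qed.

Lemma joint_kernel_ge0 s a s' : 0 <= joint_kernel P s a s'.
Proof. by apply: prodr_ge0 => j _; case: (P_kernel j (s j) (a j)). Qed.

Lemma sum_joint_kernel s a : \sum_s' joint_kernel P s a s' = 1.
Proof.
rewrite (@sum_prod_dffun _ _ _ (fun j y => P j (s j) (a j) y)).
by apply: big1 => j _; case: (P_kernel j (s j) (a j)).
Qed.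

Lemma state_dist_ge0 s0 t s : 0 <= state_dist P xi s0 t s.
Proof.
elim: t s => [|t IH] s /=; first by case: (s == s0).
apply: sumr_ge0 => s1 _; apply: mulr_ge0 => //; apply: sumr_ge0 => a _.
by apply: mulr_ge0; [exact: joint_policy_ge0 | exact: joint_kernel_ge0].
Qed.

Lemma sum_state_dist s0 t : \sum_s state_dist P xi s0 t s = 1.
Proof.
elim: t => [|t IH].
  by rewrite /= (bigD1 s0) //= eqxx big1 ?addr0 // => s /negbTE ->.
under eq_bigr do rewrite -[state_dist _ _ _ _ _]mulr1.
rewrite sum_state_dist_succ -[RHS]IH; apply: eq_bigr => s _.
under eq_bigr do under eq_bigr do rewrite mulr1.
by under eq_bigr do rewrite sum_joint_kernel mulr1; rewrite sum_joint_policy mulr1.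
Qed.

Lemma exp_stage_bound (f : JS -> JA -> R) M s0 t :
  (forall s a, `|f s a| <= M) -> `|exp_stage P xi f s0 t| <= M.
Proof.
move=> fM; apply: le_trans (ler_norm_sum _ _ _) _.
rewrite -[M]mul1r -(sum_state_dist s0 t) big_distrl /=.
apply: ler_sum => s _; rewrite normrM ger0_norm ?state_dist_ge0 //.
apply: ler_wpM2l; first exact: state_dist_ge0.
apply: le_trans (ler_norm_sum _ _ _) _.
rewrite -[M]mul1r -(sum_joint_policy s) big_distrl /=.
apply: ler_sum => a _; rewrite normrM ger0_norm ?joint_policy_ge0 //.
by apply: ler_wpM2l; [exact: joint_policy_ge0 | exact: fM].
Qed.

Lemma is_cvg_discounted (f : JS -> JA -> R) s0 {gamma : R} : 0 <= gamma < 1 ->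
  cvgn (series (fun t => gamma ^+ t * exp_stage P xi f s0 t)).
Proof.
move=> /andP[gamma_ge0 gamma_lt1]; apply: normed_cvg.
pose M := \sum_(p : JS * JA) `|f p.1 p.2|.
have M_ge0 : 0 <= M by apply: sumr_ge0.
have fM s a : `|f s a| <= M by exact: (ler_sum_term (fun p => `|f p.1 p.2|) (s, a)).
apply: (@series_le_cvg _ _ (geometric M gamma)) => [k|k|k|] /=.
- by [].
- by rewrite mulr_ge0 ?exprn_ge0.
- rewrite normrM ger0_norm ?exprn_ge0 // mulrC.
  by rewrite ler_wpM2r ?exprn_ge0 ?exp_stage_bound.
- by apply: is_cvg_geometric_series; rewrite ger0_norm.
Qed.

Lemma exp_stageD (f g : JS -> JA -> R) s0 t :
  exp_stage P xi (fun s a => f s a + g s a) s0 t =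
  exp_stage P xi f s0 t + exp_stage P xi g s0 t.
Proof.
rewrite /exp_stage -big_split /=; apply: eq_bigr => s _.
rewrite -mulrDr -big_split /=; congr (_ * _).
by apply: eq_bigr => a _; rewrite mulrDr.
Qed.

Lemma valueD (gamma : R) (f g : JS -> JA -> R) s0 : 0 <= gamma < 1 ->
  value P gamma xi (fun s a => f s a + g s a) s0 =
  value P gamma xi f s0 + value P gamma xi g s0.
Proof.
move=> gamma01; rewrite /value.
rewrite -(lim_seriesD (is_cvg_discounted f s0 gamma01) (is_cvg_discounted g s0 gamma01)).
congr (limn _); apply/funext => N; apply: eq_bigr => t _.
by rewrite exp_stageD mulrDr.
Qed.

End Profile.

Section UnilateralDeviation.
Variable i : 'I_n.

Definition free_of_state (g : JS -> R) :=
  forall s (x : S i), g (dffun_with s x) = g s.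
Definition free_of_local (H : JS -> JA -> R) :=
  forall s a (x : S i) (y : A i), H (dffun_with s x) (dffun_with a y) = H s a.

Lemma free_of_local_state H s a (x : S i) :
  free_of_local H -> H (dffun_with s x) a = H s a.
Proof. by move=> H_free; rewrite -[in LHS](dffun_with_id a i) H_free. Qed.

Lemma free_of_local_action H s a (y : A i) :
  free_of_local H -> H s (dffun_with a y) = H s a.
Proof. by move=> H_free; rewrite -[in LHS](dffun_with_id s i) H_free. Qed.

Lemma upd_policy_in (xi : profile) (p : S i -> A i -> R) :
  @upd_policy _ _ _ _ xi i p i = p.
Proof. exact: dfwith_in. Qed.

Lemma upd_policy_out (xi : profile) (p : S i -> A i -> R) j :
  j != i -> @upd_policy _ _ _ _ xi i p j = xi j.
Proof. by move=> ji; apply: dfwith_out; rewrite eq_sym. Qed.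

Lemma is_policy_profile_with (xi : profile) (p : S i -> A i -> R) :
  is_local_policy p -> (forall j, j != i -> is_local_policy (xi j)) ->
  is_policy_profile (upd_policy xi p).
Proof.
move=> p_policy xi_policy j; have [->|ji] := eqVneq j i.
  by rewrite upd_policy_in.
by rewrite upd_policy_out //; exact: xi_policy.
Qed.

Lemma joint_policy_with (xi : profile) (p : S i -> A i -> R) s a :
  joint_policy (upd_policy xi p) s a =
  p (s i) (a i) * \prod_(j < n | j != i) xi j (s j) (a j).
Proof.
rewrite /joint_policy (bigD1 i) //= upd_policy_in; congr (_ * _).
by apply: eq_bigr => j ji; rewrite upd_policy_out.
Qed.

Lemma kernel_avg_free {g : JS -> R} : free_of_state g ->
  free_of_local (fun s a => \sum_s' joint_kernel P s a s' * g s').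
Proof.
move=> g_free s a x y /=; rewrite /joint_kernel.
have others_free s' :
    \prod_(j < n | j != i) P j (dffun_with s x j) (dffun_with a y j) (s' j) =
    \prod_(j < n | j != i) P j (s j) (a j) (s' j).
  by apply: eq_bigr => j ji; rewrite !dffun_with_out.
under eq_bigr do rewrite (bigD1 i) //= -mulrA !dffun_with_in others_free.
under [RHS]eq_bigr do rewrite (bigD1 i) //= -mulrA.
apply: (sum_coord_weight_indep (P i x y) (P i (s i) (a i))
  (fun s' => \prod_(j < n | j != i) P j (s j) (a j) (s' j) * g s')).
- by case: (P_kernel i x y).
- by case: (P_kernel i (s i) (a i)).
move=> s' z; rewrite g_free; congr (_ * _).
by apply: eq_bigr => j ji; rewrite !dffun_with_out.
Qed.

Lemma policy_avg_free (xi : profile) (p : S i -> A i -> R) (H : JS -> JA -> R) :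
  is_local_policy p -> free_of_local H ->
  free_of_state (fun s => \sum_a joint_policy (upd_policy xi p) s a * H s a).
Proof.
move=> p_policy H_free s x /=.
have others_free a : \prod_(j < n | j != i) xi j (dffun_with s x j) (a j) =
                     \prod_(j < n | j != i) xi j (s j) (a j).
  by apply: eq_bigr => j ji; rewrite dffun_with_out.
under eq_bigr do rewrite joint_policy_with -mulrA dffun_with_in others_free
  free_of_local_state //.
under [RHS]eq_bigr do rewrite joint_policy_with -mulrA.
apply: (sum_coord_weight_indep (p x) (p (s i))
  (fun a => \prod_(j < n | j != i) xi j (s j) (a j) * H s a)).
- by case: (p_policy x).
- by case: (p_policy (s i)).
move=> a y; rewrite free_of_local_action //; congr (_ * _).
by apply: eq_bigr => j ji; rewrite dffun_with_out.
Qed.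

Section Deviation.
Variables (xi : profile) (p p' : S i -> A i -> R).
Hypotheses (p_policy : is_local_policy p) (p'_policy : is_local_policy p').

Lemma policy_avg_indep (H : JS -> JA -> R) s : free_of_local H ->
  \sum_a joint_policy (upd_policy xi p) s a * H s a =
  \sum_a joint_policy (upd_policy xi p') s a * H s a.
Proof.
move=> H_free; under eq_bigr do rewrite joint_policy_with -mulrA.
under [RHS]eq_bigr do rewrite joint_policy_with -mulrA.
apply: (sum_coord_weight_indep (p (s i)) (p' (s i))
  (fun a => \prod_(j < n | j != i) xi j (s j) (a j) * H s a)).
- by case: (p_policy (s i)).
- by case: (p'_policy (s i)).
move=> a y; rewrite free_of_local_action //; congr (_ * _).
by apply: eq_bigr => j ji; rewrite dffun_with_out.
Qed.

Lemma state_dist_avg_indep s0 t (g : JS -> R) : free_of_state g ->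
  \sum_s state_dist P (upd_policy xi p) s0 t s * g s =
  \sum_s state_dist P (upd_policy xi p') s0 t s * g s.
Proof.
elim: t g => [//|t IH] g g_free; rewrite !sum_state_dist_succ.
have kernel_free := kernel_avg_free g_free.
under eq_bigr do rewrite (policy_avg_indep _ _ kernel_free).
exact/IH/policy_avg_free.
Qed.

Lemma exp_stage_indep (H : JS -> JA -> R) s0 t : free_of_local H ->
  exp_stage P (upd_policy xi p) H s0 t = exp_stage P (upd_policy xi p') H s0 t.
Proof.
move=> H_free; rewrite /exp_stage.
under eq_bigr do rewrite (policy_avg_indep _ _ H_free).
exact/state_dist_avg_indep/policy_avg_free.
Qed.

Lemma value_indep (gamma : R) (H : JS -> JA -> R) s0 : free_of_local H ->
  value P gamma (upd_policy xi p) H s0 = value P gamma (upd_policy xi p') H s0.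
Proof.
move=> H_free; rewrite /value; congr (limn _); apply/funext => N.
by apply: eq_bigr => t _; rewrite exp_stage_indep.
Qed.
End Deviation.

End UnilateralDeviation.
End MarkovGame.

Theorem mainTheorem3 (R : realType) (n : nat) (S A : 'I_n -> finType)
  (P : forall i : 'I_n, S i -> A i -> S i -> R)
  (r : 'I_n -> jstate S -> jaction A -> R)
  (gamma : R)
  (phi : jstate S -> jaction A -> R) :
  0 < gamma < 1 ->
  (forall i, is_local_kernel (P i)) ->
  (forall (i : 'I_n) (s : jstate S) (a : jaction A) (si' : S i) (ai' : A i),
     r i s a - r i (upd_state s si') (upd_action a ai')
     = phi s a - phi (upd_state s si') (upd_action a ai')) ->
  let Phi := fun (xi : profile R S A) (s : jstate S) => value P gamma xi phi s in
  forall (i : 'I_n) (xi : profile R S A) (xi_i xi_i' : S i -> A i -> R),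
    is_local_policy xi_i -> is_local_policy xi_i' ->
    (forall j : 'I_n, j != i -> is_local_policy (xi j)) ->
    forall s : jstate S,
      value P gamma (upd_policy xi xi_i) (r i) s
        - value P gamma (upd_policy xi xi_i') (r i) s
      = Phi (upd_policy xi xi_i) s - Phi (upd_policy xi xi_i') s.
Proof.
move=> /andP[gamma_gt0 gamma_lt1] P_kernel r_potential Phi i xi p p' p_policy p'_policy
  xi_policy s0; rewrite /Phi.
have gamma01 : 0 <= gamma < 1 by rewrite ltW // gamma_lt1.
pose h s a := r i s a - phi s a.
have h_free : free_of_local i h.
  move=> s a x y; have := r_potential i s a x y.
  by rewrite /h /upd_state /upd_action /dffun_with; lra.
have r_split : r i = (fun s a => phi s a + h s a).
  by apply/funext => s; apply/funext => a; rewrite /h addrC subrK.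
clearbody h; rewrite r_split.
have xi_p : is_policy_profile (upd_policy xi p) by exact: is_policy_profile_with.
have xi_p' : is_policy_profile (upd_policy xi p') by exact: is_policy_profile_with.
have value_h : value P gamma (upd_policy xi p) h s0 = value P gamma (upd_policy xi p') h s0.
  exact: value_indep.
rewrite !(valueD _ P_kernel) // value_h.
ring.
Qed.
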